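(* Let $V_1,\dots,V_N>0$ be fixed strengths and let $(X_{i,j})_{1\le i<j\le N}$ be independent Bernoulli variables under $\mathbb{P}_V$ with $\mathbb{P}_V(X_{i,j}=1)=\frac{V_i}{V_i+V_j}$; set $X_{j,i}=1-X_{i,j}$, $S_i=\sum_{j\ne i}X_{i,j}$ and $Z_N=\max_{1\le i\le N}S_i$. Then for any $a>0$, \[\mathbb{P}_V(Z_N\le a)\le\prod_{i=1}^N\mathbb{P}_V(S_i\le a).\]
   Context: In the paper the strengths are order statistics of i.i.d. positive random variables and the statement is made $\mathbb{P}$-almost surely for the conditional probability $\mathbb{P}_V$ given the strengths; this is equivalent to the statement for arbitrary fixed positive strengths. *)

From HB Require Import structures.
From mathcomp Require Import all_boot all_order all_algebra.
Set Implicit Arguments. Unset Strict Implicit. Unset Printing Implicit Defensive.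
Import Order.TTheory GRing.Theory Num.Theory.
Local Open Scope ring_scope.

(* Unordered pairs {i,j} with i < j, indices in 'I_N (players 1..N). *)
Definition pairs (N : nat) := {p : 'I_N * 'I_N | (p.1 < p.2)%N}.

(* An outcome assigns to each pair (i,j), i<j, the value X_{i,j} in {0,1}. *)
Definition outcome (N : nat) := {ffun pairs N -> bool}.

Section BT.
Variables (R : realFieldType) (N : nat) (V : 'I_N -> R).

Definition pwin (e : pairs N) : R := V (val e).1 / (V (val e).1 + V (val e).2).

Definition weight (w : outcome N) : R :=
  \prod_(e : pairs N) (if w e then pwin e else 1 - pwin e).

Definition PV (E : pred (outcome N)) : R := \sum_(w : outcome N | E w) weight w.

(* X_{i,j} for i<j read off the outcome; X_{j,i} = 1 - X_{i,j}; X_{i,i} unused. *)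
Definition Xij (w : outcome N) (i j : 'I_N) : nat :=
  match insub (i, j) : option (pairs N) with
  | Some e => nat_of_bool (w e)
  | None => match insub (j, i) : option (pairs N) with
            | Some e => (1 - nat_of_bool (w e))%N
            | None => 0%N
            end
  end.

Definition Sc (w : outcome N) (i : 'I_N) : nat := (\sum_(j < N | j != i) Xij w i j)%N.

Definition ZN (w : outcome N) : nat := (\max_(i < N) Sc w i)%N.
End BT.

From Pilot Require Import Defs.
From HB Require Import structures.
From mathcomp Require Import all_boot all_order all_algebra.
From mathcomp Require Import ring lra.
Set Implicit Arguments. Unset Strict Implicit. Unset Printing Implicit Defensive.
Import Order.TTheory GRing.Theory Num.Theory.
Local Open Scope ring_scope.

(* Induction on the games, with the thresholds [S_i <= a] generalised to
   arbitrary down-closed conditions on the scores.  Conditioning on one game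
   between u and v writes the joint probability as a mixture, with weights
   p and 1 - p, of joint probabilities for the remaining games with the
   thresholds of u or of v lowered by one; the induction hypothesis bounds
   each by a product.  The two products differ only in the factors of u and
   v, which move in opposite directions, so the mixture of the products is
   at most the product of the mixtures: their difference is
   p (1 - p) (g_u - f_u) (f_v - g_v) times the common factors. *)

Lemma mix_prod_le_prod_mix (R : realDomainType) (I : finType) (u v : I)
    (f g : I -> R) (t : R) :
  u != v -> 0 <= t <= 1 -> (forall i, 0 <= f i) ->
  f u <= g u -> g v <= f v -> (forall i, i != u -> i != v -> f i = g i) ->
  t * \prod_i f i + (1 - t) * \prod_i g i <= \prod_i (t * f i + (1 - t) * g i).
Proof.
move=> neq_uv /andP[t_ge0 t_le1] f_ge0 fgu gfv fg_else.
have split_uv (h : I -> R) :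
    \prod_i h i = h u * h v * \prod_(i | (i != u) && (i != v)) h i.
  by rewrite (bigD1 u) //= (bigD1 v) 1?eq_sym //= mulrA.
rewrite !split_uv; set C := \prod_(i | (i != u) && (i != v)) f i.
have C_ge0 : 0 <= C by apply: prodr_ge0.
have -> : \prod_(i | (i != u) && (i != v)) g i = C.
  by apply: eq_bigr => i /andP[iu iv]; rewrite fg_else.
have -> : \prod_(i | (i != u) && (i != v)) (t * f i + (1 - t) * g i) = C.
  by apply: eq_bigr => i /andP[iu iv]; rewrite fg_else //; ring.
rewrite -subr_ge0.
have -> : (t * f u + (1 - t) * g u) * (t * f v + (1 - t) * g v) * C -
    (t * (f u * f v * C) + (1 - t) * (g u * g v * C)) =
    t * (1 - t) * (g u - f u) * (f v - g v) * C by ring.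
by rewrite !mulr_ge0 // subr_ge0.
Qed.

Lemma bigmax_natr_le (R : numDomainType) (I : finType) (F : I -> nat) (a : R) :
  0 <= a -> ((\max_i F i)%:R <= a) = [forall i, (F i)%:R <= a].
Proof.
move=> a_ge0; apply/idP/forallP => [le_max_a i | le_F_a].
  by apply: le_trans le_max_a; rewrite ler_nat (leq_bigmax i).
apply: (big_ind (fun m : nat => m%:R <= a)) => // x y x_le y_le.
by rewrite /maxn; case: ltnP.
Qed.

Definition down_closed (P : pred nat) := forall m, P m.+1 -> P m.

Section BradleyTerry.
Variables (R : realFieldType) (N : nat) (V : 'I_N -> R).
Hypothesis V_gt0 : forall i, 0 < V i.

Local Notation p := (pwin V).
Local Notation PV := (PV V).

Lemma pwin_ge0 e : 0 <= p e.
Proof. by rewrite divr_ge0 // ltW ?addr_gt0. Qed.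

Lemma pwin_le1 e : p e <= 1.
Proof. by rewrite ler_pdivrMr ?addr_gt0 // mul1r lerDl ltW. Qed.

Definition game_weight (e : pairs N) (b : bool) : R := if b then p e else 1 - p e.

Lemma game_weight_ge0 e b : 0 <= game_weight e b.
Proof. by case: b; rewrite /game_weight ?subr_ge0 ?pwin_ge0 ?pwin_le1. Qed.

Lemma weight_ge0 w : 0 <= weight V w.
Proof. by apply: prodr_ge0 => e _; apply: game_weight_ge0. Qed.

Lemma PV_ge0 E : 0 <= PV E.
Proof. by apply: sumr_ge0 => w _; apply: weight_ge0. Qed.

Lemma PV_le (E1 E2 : pred (outcome N)) : (forall w, E1 w -> E2 w) -> PV E1 <= PV E2.
Proof.
move=> sub12; rewrite /Defs.PV [leRHS](bigID E1) /=.
rewrite [leLHS](eq_bigl (fun w => E2 w && E1 w)) ?lerDl.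
- by apply: sumr_ge0 => w _; apply: weight_ge0.
- by move=> w; case E1w: (E1 w); rewrite ?andbT ?andbF // sub12.
Qed.

Lemma eq_PV (E1 E2 : pred (outcome N)) : E1 =1 E2 -> PV E1 = PV E2.
Proof. exact: eq_bigl. Qed.

Lemma PV_const (b : bool) : PV (fun=> b) = if b then 1 else 0.
Proof.
case: b; last by rewrite /Defs.PV big_pred0.
rewrite /Defs.PV /weight -(bigA_distr_bigA game_weight) /=.
by apply: big1 => e _; rewrite big_bool /game_weight /=; ring.
Qed.

Definition flip (e : pairs N) (w : outcome N) : outcome N :=
  [ffun x => if x == e then ~~ w e else w x].

Lemma flipK e : involutive (flip e).
Proof.
move=> w; apply/ffunP => x; rewrite !ffunE eqxx.
by case: eqP => [->|]; rewrite ?negbK.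
Qed.

Lemma flip_other e w x : x != e -> flip e w x = w x.
Proof. by rewrite ffunE => /negbTE ->. Qed.

Definition ignores_game e (H : pred (outcome N)) := forall w, H (flip e w) = H w.

Definition weight_off e (w : outcome N) := \prod_(x | x != e) game_weight x (w x).

Lemma weight_at e w : weight V w = game_weight e (w e) * weight_off e w.
Proof. by rewrite /weight (bigD1 e). Qed.

Lemma sum_weight_off_flip e H : ignores_game e H ->
  \sum_(w | H w && ~~ w e) weight_off e w = \sum_(w | H w && w e) weight_off e w.
Proof.
move=> He; rewrite (reindex_inj (can_inj (flipK e))) /=.
apply: eq_big => [w|w _]; first by rewrite He ffunE eqxx negbK.
by apply: eq_bigr => x /flip_other ->.
Qed.

Lemma PV_if_game e (H0 H1 : pred (outcome N)) :
  PV (fun w => if w e then H1 w else H0 w) =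
  p e * \sum_(w | H1 w && w e) weight_off e w +
  (1 - p e) * \sum_(w | H0 w && ~~ w e) weight_off e w.
Proof.
rewrite /Defs.PV (bigID (fun w : outcome N => w e)) /= !mulr_sumr.
congr (_ + _); apply: eq_big => [w|w /andP[_ we]].
- by case: (w e); rewrite ?andbT ?andbF.
- by rewrite (weight_at e) /game_weight we.
- by case: (w e); rewrite ?andbT ?andbF.
- by rewrite (weight_at e) /game_weight (negbTE we).
Qed.

Lemma PV_ignoring_game e H : ignores_game e H ->
  PV H = \sum_(w | H w && w e) weight_off e w.
Proof.
move=> He; have -> : PV H = PV (fun w => if w e then H w else H w).
  by apply: eq_PV => w; case: (w e).
by rewrite PV_if_game sum_weight_off_flip //; ring.
Qed.

Lemma PV_condition_game e (H0 H1 : pred (outcome N)) :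
  ignores_game e H0 -> ignores_game e H1 ->
  PV (fun w => if w e then H1 w else H0 w) = p e * PV H1 + (1 - p e) * PV H0.
Proof.
move=> He0 He1.
by rewrite PV_if_game sum_weight_off_flip // -!PV_ignoring_game.
Qed.

Definition winner (e : pairs N) (b : bool) : 'I_N := if b then (val e).1 else (val e).2.

Definition score (s : seq (pairs N)) (w : outcome N) (i : 'I_N) : nat :=
  (\sum_(e <- s) (winner e (w e) == i))%N.

Lemma score_cons e s w i :
  score (e :: s) w i = (score s w i + (winner e (w e) == i))%N.
Proof. by rewrite /score big_cons addnC. Qed.

Lemma score_flip e s w i : e \notin s -> score s (flip e w) i = score s w i.
Proof.
move=> e_notin_s; rewrite /score big_seq_cond [RHS]big_seq_cond.
apply: eq_bigr => x /andP[xs _]; rewrite flip_other //.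
by apply: contraNneq e_notin_s => <-.
Qed.

Lemma winner_neq e : winner e true != winner e false.
Proof. by rewrite neq_ltn (valP e). Qed.

Lemma PV_forall_scores_le_prod s : uniq s ->
  forall D : 'I_N -> pred nat, (forall i, down_closed (D i)) ->
  PV (fun w => [forall i, D i (score s w i)]) <=
  \prod_i PV (fun w => D i (score s w i)).
Proof.
elim: s => [|e s IH] /=.
  move=> _ D _; have score_nil w i : score [::] w i = 0%N by rewrite /score big_nil.
  have -> : PV (fun w => [forall i, D i (score [::] w i)]) = PV (fun=> [forall i, D i 0%N]).
    by apply: eq_PV => w; apply: eq_forallb => i; rewrite score_nil.
  rewrite PV_const; case: forallP => [D0|_]; last by apply: prodr_ge0 => i _; apply: PV_ge0.
  rewrite big1 // => i _; have /= <- := PV_const true.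
  by apply: eq_PV => w; rewrite score_nil D0.
move=> /andP[e_notin_s uniq_s] D D_dc.
pose Dsh b i m := D i (m + (winner e b == i))%N.
have Dsh_dc b i : down_closed (Dsh b i) by move=> m; rewrite /Dsh addSn; apply: D_dc.
pose A b i := PV (fun w => Dsh b i (score s w i)).
have D_cons i w : D i (score (e :: s) w i) =
    if w e then Dsh true i (score s w i) else Dsh false i (score s w i).
  by rewrite score_cons; case: (w e).
have -> : PV (fun w => [forall i, D i (score (e :: s) w i)]) =
    PV (fun w => if w e then [forall i, Dsh true i (score s w i)]
                 else [forall i, Dsh false i (score s w i)]).
  by apply: eq_PV => w; case we: (w e); apply: eq_forallb => i; rewrite D_cons we.
have ign_all b : ignores_game e (fun w => [forall i, Dsh b i (score s w i)]).
  by move=> w; apply: eq_forallb => i; rewrite score_flip.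
have PV_D i : PV (fun w => D i (score (e :: s) w i)) = p e * A true i + (1 - p e) * A false i.
  rewrite -PV_condition_game => [|w|w]; rewrite ?score_flip //.
  by apply: eq_PV => w; rewrite D_cons.
rewrite PV_condition_game // (eq_bigr _ (fun i _ => PV_D i)).
apply: (le_trans (y := p e * \prod_i A true i + (1 - p e) * \prod_i A false i)).
  by rewrite lerD // ler_wpM2l ?pwin_ge0 ?subr_ge0 ?pwin_le1 ?IH.
apply: (@mix_prod_le_prod_mix _ _ _ _ (A true) (A false) (p e) (winner_neq e)).
- by rewrite pwin_ge0 pwin_le1.
- by move=> i; apply: PV_ge0.
- apply: PV_le => w; rewrite /Dsh eqxx eq_sym (negbTE (winner_neq e)) addn0 addn1.
  exact: D_dc.
- apply: PV_le => w; rewrite /Dsh eqxx (negbTE (winner_neq e)) addn0 addn1.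
  exact: D_dc.
- move=> i iu iv; apply: eq_PV => w.
  by rewrite /Dsh eq_sym (negbTE iu) eq_sym (negbTE iv).
Qed.

Definition loser e b := winner e (~~ b).

Lemma winner_loser e b i j :
  (winner e b == i) && (loser e b == j) = (val e == if b then (i, j) else (j, i)).
Proof.
rewrite /loser /winner; case: e => -[x y] /= _.
by case: b; rewrite xpair_eqE // andbC.
Qed.

Lemma pair_lt (e : pairs N) x y : val e == (x, y) -> (x < y)%N.
Proof. by move=> /eqP e_xy; have := valP e; rewrite e_xy. Qed.

Lemma Xij_wins w i j : i != j ->
  Xij w i j = (\sum_e ((winner e (w e) == i) && (loser e (w e) == j)))%N.
Proof.
move=> neq_ij; under eq_bigr do rewrite winner_loser.
have pair_neq : ((i, j) == (j, i)) = false by rewrite xpair_eqE (negbTE neq_ij).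
rewrite /Xij; case: insubP => [e0 /= lt_ij e0_ij | nlt_ij].
  rewrite (bigD1 e0) //= e0_ij big1 => [|e ne_e0].
    by case: (w e0); rewrite ?pair_neq ?eqxx.
  apply/eqP; rewrite eqb0; case: (w e); first by rewrite -e0_ij val_eqE.
  by apply: contraTN lt_ij => /pair_lt /ltnW; rewrite leqNgt.
case: insubP => [e1 /= lt_ji e1_ji | nlt_ji].
  rewrite (bigD1 e1) //= e1_ji eq_sym big1 => [|e ne_e1].
    by case: (w e1); rewrite ?pair_neq ?eqxx.
  apply/eqP; rewrite eqb0; case: (w e); last by rewrite -e1_ji val_eqE.
  by apply: contra nlt_ij => /pair_lt.
rewrite big1 // => e _; apply/eqP; rewrite eqb0.
by case: (w e); [apply: contra nlt_ij | apply: contra nlt_ji] => /pair_lt.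
Qed.

Lemma Sc_score (w : outcome N) (i : 'I_N) : Sc w i = score (index_enum (pairs N)) w i.
Proof.
rewrite /Sc; under eq_bigr => j ji do rewrite Xij_wins 1?eq_sym //.
rewrite exchange_big; apply: eq_bigr => e _.
case: eqP => [win_i|_] /=; last by rewrite big1.
have loser_neq_i : loser e (w e) != i.
  by rewrite -win_i /loser /winner; case: (w e); rewrite /= ?winner_neq // eq_sym winner_neq.
rewrite (bigD1 (loser e (w e))) //= eqxx big1 // => j /andP[_].
by rewrite eq_sym => /negbTE ->.
Qed.

End BradleyTerry.

Theorem lemma8 (R : realFieldType) (N : nat) (V : 'I_N -> R)
  (hV : forall i, 0 < V i) (a : R) (ha : 0 < a) :
  PV V (fun w => (ZN w)%:R <= a) <= \prod_(i < N) PV V (fun w => (Sc w i)%:R <= a).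
Proof.
have le_a_down_closed : down_closed (fun m => m%:R <= a).
  by move=> m; apply: le_trans; rewrite ler_nat.
have Z_le w : ((ZN w)%:R <= a) = [forall i, (score (index_enum (pairs N)) w i)%:R <= a].
  by rewrite /ZN bigmax_natr_le ?ltW //; apply: eq_forallb => i; rewrite Sc_score.
have Sc_le i : (fun w => (Sc w i)%:R <= a) =1
    (fun w => (score (index_enum (pairs N)) w i)%:R <= a).
  by move=> w; rewrite Sc_score.
rewrite (eq_PV V Z_le); under eq_bigr => i _ do rewrite (eq_PV V (Sc_le i)).
exact: (PV_forall_scores_le_prod hV (index_enum_uniq _) (D := fun _ m => m%:R <= a)
  (fun=> le_a_down_closed)).
Qed.
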